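(* Let $s\geq 2$ and let $a,b$ be positive integers with $\operatorname{lcm}(a,b)=s$. In $G_{(s,0)}$, the subgroup $\langle u^a,v^b\rangle$ is core-free of index $6ab$; hence $G_{(s,0)}$ has a faithful transitive permutation representation of degree $6ab$.
   Context: $G_{(s,0)}$ is the group of the toroidal hypermap $(3,3,3)_{(s,0)}$: the Coxeter group $[3,3,3]=\langle\rho_0,\rho_1,\rho_2\mid \rho_i^2=1,\ (\rho_i\rho_j)^3=1\ (i\neq j)\rangle$ factored by $(\rho_0\rho_1\rho_2\rho_1)^s$; it has order $6s^2$. Here $u=\rho_0\rho_1\rho_2\rho_1$ and $v=\rho_1u\rho_1=\rho_1\rho_0\rho_1\rho_2$ generate the abelian normal translation subgroup $T=\langle u,v\rangle\cong C_s\times C_s$. A subgroup is core-free if it contains no nontrivial normal subgroup of the group. *)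

From mathcomp Require Import all_boot all_fingroup.
Set Implicit Arguments.
Unset Strict Implicit.
Unset Printing Implicit Defensive.
Local Open Scope group_scope.

Definition G_s0_rels (hT : finGroupType) (s : nat) (r0 r1 r2 : hT) : Prop :=
  [/\ r0 ^+ 2 = 1, r1 ^+ 2 = 1 & r2 ^+ 2 = 1] /\
  [/\ (r0 * r1) ^+ 3 = 1, (r0 * r2) ^+ 3 = 1, (r1 * r2) ^+ 3 = 1
    & (r0 * r1 * r2 * r1) ^+ s = 1].

(* G (with distinguished generators r0 r1 r2) is the group presented by
   <rho0,rho1,rho2 | G_s0_rels>: generated by the r_i, satisfying the
   relations, and universal among (finite) groups with elements satisfying
   the relations.  (The presented group is finite, of order 6 s^2.) *)
Definition is_G_s0 (gT : finGroupType) (s : nat) (G : {group gT})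
  (r0 r1 r2 : gT) : Prop :=
  [/\ G :=: <<[set r0; r1; r2]>>,
      G_s0_rels s r0 r1 r2
    & forall (hT : finGroupType) (h0 h1 h2 : hT),
        G_s0_rels s h0 h1 h2 ->
        exists f : {morphism G >-> hT}, [/\ f r0 = h0, f r1 = h1 & f r2 = h2]].

Definition trans_u (gT : finGroupType) (r0 r1 r2 : gT) : gT := r0 * r1 * r2 * r1.
Definition trans_v (gT : finGroupType) (r0 r1 r2 : gT) : gT := r1 * r0 * r1 * r2.

Definition core_free (gT : finGroupType) (G H : {group gT}) : Prop :=
  forall N : {group gT}, N <| G -> N \subset H -> N :=: 1.

From mathcomp Require Import all_boot all_fingroup all_solvable all_algebra.
From mathcomp Require Import ring.
Set Implicit Arguments.
Unset Strict Implicit.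
Unset Printing Implicit Defensive.
Local Open Scope group_scope.

(* Let G = <x, y, z> be the group G_(s,0), u = x y z y and v = y x y z.
   1. The Coxeter relations alone imply that conjugation by x and y maps u
      and v into <u> * <v>, that u and v commute, and that z = y x u y.
      Hence T = <u> * <v> is normalised by <x, y>, G = T * <x, y>, and
      #|<x, y>| <= 6, so #|G| <= 6 s^2.
   2. Two concrete models satisfy the defining relations: affine maps of
      (Z/s)^2, where u and v act as independent unit translations, and S_3,
      where u and v act trivially.  Through the universal property of G the
      first gives #[u] = #[v] = s and <u> :&: <v> = 1, so #|T| = s^2; the
      second shows that 6 divides #|G : T|.  Hence #|G| = 6 s^2.
   3. For lcm(a, b) = s, H = <u^a> * <v^b> has order (s/a)(s/b), hence index
      6ab.  A normal subgroup inside H also lies in H^y = <v^a> * <u^b>; by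
      unique decomposition in T and the lcm condition it is trivial.
   4. A core-free subgroup H of G gives a faithful transitive action of G on
      the #|G : H| right cosets of H, which proves the theorem. *)

(* Involutions and braid relations, in a form that rewrites inside
   right-associated words. *)
Lemma invg_involution (gT : finGroupType) (a : gT) : a ^+ 2 = 1 -> a^-1 = a.
Proof. by move=> a2; apply/eqP; rewrite eq_invg_mul -a2 expgS expg1. Qed.

Lemma involutionK (gT : finGroupType) (a : gT) :
  a ^+ 2 = 1 -> forall w, a * (a * w) = w.
Proof. by move=> a2 w; rewrite -{1}(invg_involution a2) mulKg. Qed.

Lemma braid_rel (gT : finGroupType) (a b : gT) :
  a ^+ 2 = 1 -> b ^+ 2 = 1 -> (a * b) ^+ 3 = 1 ->
  forall w, a * (b * (a * w)) = b * (a * (b * w)).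
Proof.
move=> a2 b2 ab3 w.
have : a * b * a * (b * a * b) = 1 by rewrite -ab3 !expgS expg0 mulg1 !mulgA.
move/eqP; rewrite -eq_invg_mul !invMg !invg_involution // => /eqP aba.
by rewrite mulgA in aba; rewrite !mulgA aba.
Qed.

Lemma card_gen_involutions_le (gT : finGroupType) (a b : gT) :
  a ^+ 2 = 1 -> b ^+ 2 = 1 -> (a * b) ^+ 3 = 1 -> #|<<[set a; b]>>| <= 6.
Proof.
move=> a2 b2 ab3; set D := (<[a * b]> <*> <[a]>)%G.
have na : a \in 'N(<[a * b]>).
  rewrite inE -cycleJ cycle_subG /conjg -mulgA mulKg.
  have -> : b * a = (a * b)^-1 by rewrite invMg !invg_involution.
  by rewrite groupV cycle_id.
have DE : D = <[a * b]> * <[a]> :> {set gT}.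
  by rewrite /D /= norm_joinEr ?cycle_subG.
have aD : a \in D by rewrite mem_gen // inE cycle_id orbT.
have abD : a * b \in D by rewrite mem_gen // inE cycle_id.
have sD : <<[set a; b]>> \subset D.
  rewrite gen_subG subUset !sub1set aD /=.
  suff: a^-1 * (a * b) \in D by rewrite mulKg.
  by rewrite groupM ?groupV.
apply: leq_trans (subset_leq_card sD) _; rewrite DE.
apply: leq_trans (dvdn_leq _ (dvdn_cardMg _ _)) _; first by rewrite muln_gt0 !cardG_gt0.
rewrite -!orderE; apply: (@leq_mul _ _ 3 2); apply: dvdn_leq => //.
  by rewrite order_dvdn ab3.
by rewrite order_dvdn a2.
Qed.

Lemma TI_mul_eq (gT : finGroupType) (A B : {group gT}) (p q p' q' : gT) :
  A :&: B = 1 -> p \in A -> p' \in A -> q \in B -> q' \in B ->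
  p * q = p' * q' -> p = p' /\ q = q'.
Proof.
move=> tiAB pA p'A qB q'B e.
have eq_q : q = q' by rewrite -(remgrMid tiAB pA qB) e remgrMid.
by split=> //; apply: (mulIg q); rewrite e eq_q.
Qed.

Lemma lcm_dvd_of_congr a b i j :
  a * i = b * j %[mod lcmn a b] -> lcmn a b %| a * i.
Proof.
move=> e; have b_dvd := dvdn_lcmr a b; rewrite dvdn_lcm dvdn_mulr //=.
by rewrite /dvdn -(modn_dvdm (a * i) b_dvd) e (modn_dvdm _ b_dvd) modnMr.
Qed.

Section CosetAction.
Variables (gT : finGroupType) (G H : {group gT}).
Local Notation C := (rcosets H G).

Lemma rcosets_self : (H : {set gT}) \in C.
Proof. by apply/rcosetsP; exists 1; rewrite ?group1 ?rcoset1. Qed.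

Lemma rcosets_closed X g : X \in C -> g \in G -> X :* g \in C.
Proof.
move=> /rcosetsP[y yG ->] gG; apply/rcosetsP; exists (y * g); first exact: groupM.
by rewrite rcosetM.
Qed.

Definition coset_act (g : gT) (i : 'I_#|C|) : 'I_#|C| :=
  if g \in G then enum_rank_in rcosets_self (enum_val i :* g) else i.

Lemma coset_actE g i : g \in G -> enum_val (coset_act g i) = enum_val i :* g.
Proof.
by move=> gG; rewrite /coset_act gG enum_rankK_in // rcosets_closed ?enum_valP.
Qed.

Lemma coset_act_inj g : injective (coset_act g).
Proof.
move=> i j; case: (boolP (g \in G)) => [gG|nGg]; last by rewrite /coset_act (negPf nGg).
by move/(congr1 enum_val); rewrite !coset_actE // => /rcoset_inj/enum_val_inj.
Qed.

Definition coset_perm (g : gT) : {perm 'I_#|C|} := perm (@coset_act_inj g).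

Lemma coset_permM : {in G &, {morph coset_perm : x y / x * y}}.
Proof.
move=> x y xG yG /=; apply/permP => i; apply: enum_val_inj.
by rewrite permM !permE !coset_actE ?groupM // rcosetM.
Qed.

Canonical coset_morphism := Morphism coset_permM.

Lemma ker_coset_perm : 'ker coset_morphism \subset H.
Proof.
apply/subsetP => g /morphpreP[gG /set1P /permP /(_ (enum_rank_in rcosets_self H))].
rewrite perm1 permE => /(congr1 enum_val).
rewrite coset_actE // enum_rankK_in; last exact: rcosets_self.
by move=> <-; rewrite rcoset_refl.
Qed.

Lemma coset_perm_transitive :
  [transitive coset_morphism @* G, on [set: 'I_#|C|] | 'P].
Proof.
apply/imsetP; exists (enum_rank_in rcosets_self H) => //.
apply/setP => j; rewrite inE; apply/esym/orbitP.
have /rcosetsP[x xG ex] := enum_valP j.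
exists (coset_perm x); first exact: mem_morphim.
change (coset_perm x (enum_rank_in rcosets_self H) = j); apply: enum_val_inj.
rewrite permE coset_actE // enum_rankK_in; last exact: rcosets_self.
by rewrite -ex.
Qed.
End CosetAction.

Lemma core_free_action (gT : finGroupType) (G H : {group gT}) :
  core_free G H ->
  exists f : {morphism G >-> {perm 'I_#|G : H|}},
    'injm f /\ [transitive f @* G, on [set: 'I_#|G : H|] | 'P].
Proof.
move=> cfH; exists (coset_morphism G H); split; last exact: coset_perm_transitive.
by rewrite (cfH _ (ker_normal _) (ker_coset_perm G H)).
Qed.

Definition coxeter_rels (gT : finGroupType) (x y z : gT) : Prop :=
  [/\ x ^+ 2 = 1, y ^+ 2 = 1 & z ^+ 2 = 1] /\
  [/\ (x * y) ^+ 3 = 1, (x * z) ^+ 3 = 1 & (y * z) ^+ 3 = 1].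

Lemma G_s0_coxeter (gT : finGroupType) s (x y z : gT) :
  G_s0_rels s x y z -> coxeter_rels x y z.
Proof. by case=> invs [xy3 xz3 yz3 _]; split. Qed.

Section TranslationRelations.
Variables (gT : finGroupType) (x y z : gT).
Hypothesis cox : coxeter_rels x y z.

Local Notation u := (trans_u x y z).
Local Notation v := (trans_v x y z).
Let x2 : x ^+ 2 = 1. Proof. by have [[]] := cox. Qed.
Let y2 : y ^+ 2 = 1. Proof. by have [[]] := cox. Qed.
Let z2 : z ^+ 2 = 1. Proof. by have [[]] := cox. Qed.
Let xK := involutionK x2.
Let yK := involutionK y2.
Let bxy : forall w, x * (y * (x * w)) = y * (x * (y * w)).
Proof. by have [[? ? ?] [? ? ?]] := cox; apply: braid_rel. Qed.
Let bxz : forall w, x * (z * (x * w)) = z * (x * (z * w)).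
Proof. by have [[? ? ?] [? ? ?]] := cox; apply: braid_rel. Qed.
Let byz : forall w, y * (z * (y * w)) = z * (y * (z * w)).
Proof. by have [[? ? ?] [? ? ?]] := cox; apply: braid_rel. Qed.

(* Both sides become right-associated words in x, y, z ending in 1, on which
   the involution and braid rules rewrite. *)
Local Ltac expand := rewrite /trans_u /trans_v ?/conjg ?invMg
  ?(invg_involution x2) ?(invg_involution y2) ?(invg_involution z2);
  rewrite -[LHS]mulg1 -[RHS]mulg1 -!mulgA.

Lemma trans_u_conj_x : u ^ x = u^-1.
Proof. by expand; rewrite xK. Qed.

Lemma trans_v_conj_x : v ^ x = u^-1 * v.
Proof. by expand; rewrite bxy yK bxz bxy !yK. Qed.

Lemma trans_u_conj_y : u ^ y = v.
Proof. by expand; rewrite yK. Qed.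

Lemma trans_v_conj_y : v ^ y = u.
Proof. by expand; rewrite yK. Qed.

Lemma trans_commute : commute u v.
Proof. by rewrite /commute; expand; rewrite yK -bxy bxz -byz yK. Qed.

Lemma z_from_trans : z = y * x * u * y.
Proof. by expand; rewrite xK !yK. Qed.
End TranslationRelations.

Lemma morph_trans (aT rT : finGroupType) (D : {group aT})
    (f : {morphism D >-> rT}) (x y z : aT) :
  x \in D -> y \in D -> z \in D ->
  f (trans_u x y z) = trans_u (f x) (f y) (f z) /\
  f (trans_v x y z) = trans_v (f x) (f y) (f z).
Proof. by move=> xD yD zD; rewrite !morphM ?groupM. Qed.

(* The affine model: x, y, z act on (Z/s)^2 so that u and v become the unit
   translations along the two axes. *)
Section AffineModel.
Import GRing.Theory.
Variable s : nat.
Local Notation point := ('Z_s * 'Z_s)%type.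

Definition aff_x (p : point) : point := ((- p.1 - p.2)%R, p.2).
Definition aff_y (p : point) : point := (p.2, p.1).
Definition aff_z (p : point) : point := (p.1, (1 - p.1 - p.2)%R).

Lemma aff_xK : involutive aff_x.
Proof. by case=> p q; rewrite /aff_x /=; congr pair; ring. Qed.

Lemma aff_yK : involutive aff_y.
Proof. by case. Qed.

Lemma aff_zK : involutive aff_z.
Proof. by case=> p q; rewrite /aff_z /=; congr pair; ring. Qed.

Definition perm_x : {perm point} := perm (inv_inj aff_xK).
Definition perm_y : {perm point} := perm (inv_inj aff_yK).
Definition perm_z : {perm point} := perm (inv_inj aff_zK).

Local Ltac aff_eval :=
  rewrite !permM !permE /aff_x /aff_y /aff_z /=; congr pair; ring.

Lemma aff_trans_u (p : point) :
  trans_u perm_x perm_y perm_z p = (p.1 + 1, p.2)%R.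
Proof. by case: p => p q; rewrite /trans_u; aff_eval. Qed.

Lemma aff_trans_v (p : point) :
  trans_v perm_x perm_y perm_z p = (p.1, p.2 + 1)%R.
Proof. by case: p => p q; rewrite /trans_v; aff_eval. Qed.

Lemma aff_trans_uX n (p : point) :
  (trans_u perm_x perm_y perm_z ^+ n) p = (p.1 + n%:R, p.2)%R.
Proof.
elim: n p => [|n IHn] p; first by rewrite expg0 perm1 addr0; case: p.
by rewrite expgSr permM IHn aff_trans_u /= mulrSr addrA.
Qed.

Lemma aff_trans_vX n (p : point) :
  (trans_v perm_x perm_y perm_z ^+ n) p = (p.1, p.2 + n%:R)%R.
Proof.
elim: n p => [|n IHn] p; first by rewrite expg0 perm1 addr0; case: p.
by rewrite expgSr permM IHn aff_trans_v /= mulrSr addrA.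
Qed.

Lemma aff_rels : 1 < s -> G_s0_rels s perm_x perm_y perm_z.
Proof.
move=> s_gt1; split; first by split; apply/permP => -[p q];
  rewrite expgS expg1; aff_eval.
split; try by apply/permP => -[p q]; rewrite !expgS expg0 mulg1; aff_eval.
apply/permP => p; rewrite -/(trans_u _ _ _) aff_trans_uX perm1 pchar_Zp // addr0.
by case: p.
Qed.

(* Evaluating at the origin: u^i = v^j forces s | i and s | j. *)
Lemma aff_trans_indep i j : 1 < s ->
  trans_u perm_x perm_y perm_z ^+ i = trans_v perm_x perm_y perm_z ^+ j ->
  (s %| i) && (s %| j).
Proof.
move=> s_gt1 /(congr1 (fun g : {perm point} => g (0, 0)%R)).
rewrite aff_trans_uX aff_trans_vX /= !add0r => -[ui vj].
move: (congr1 (@nat_of_ord _) ui) (congr1 (@nat_of_ord _) vj).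
by rewrite !val_Zp_nat //= => {}ui /esym {}vj; rewrite /dvdn ui vj.
Qed.
End AffineModel.

(* The S_3 model: x, y, z act as the three transpositions of 'I_3, so u and v
   act trivially while x and x y have orders 2 and 3. *)
Section SymmetricModel.
Let i0 : 'I_3 := @Ordinal 3 0 isT.
Let i1 : 'I_3 := @Ordinal 3 1 isT.
Let i2 : 'I_3 := @Ordinal 3 2 isT.

Definition sym_x : 'S_3 := tperm i0 i1.
Definition sym_y : 'S_3 := tperm i1 i2.
Definition sym_z : 'S_3 := tperm i0 i2.

Local Ltac sym_eval := apply/permP => -[[|[|[|//]]] lt_i3];
  rewrite ?expgS ?expg0 !permM !permE /=; apply/val_inj; rewrite /= ?permE //=.

Lemma sym_trans_u : trans_u sym_x sym_y sym_z = 1.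
Proof. by rewrite /trans_u; sym_eval. Qed.

Lemma sym_trans_v : trans_v sym_x sym_y sym_z = 1.
Proof. by rewrite /trans_v; sym_eval. Qed.

Lemma sym_rels s : G_s0_rels s sym_x sym_y sym_z.
Proof.
split; first by split; sym_eval.
by split; try sym_eval; rewrite -/(trans_u _ _ _) sym_trans_u expg1n.
Qed.

Lemma order_sym_x : #[sym_x] = 2.
Proof.
apply: nt_prime_order => //; first by have [[]] := sym_rels 0.
by apply/eqP => /permP /(_ i0); rewrite !permE.
Qed.

Lemma order_sym_xy : #[sym_x * sym_y] = 3.
Proof.
apply: nt_prime_order => //; first by have [_ []] := sym_rels 0.
by apply/eqP => /permP /(_ i0); rewrite permM !permE.
Qed.
End SymmetricModel.

Section PresentedGroup.
Variables (gT : finGroupType) (s : nat) (G : {group gT}) (x y z : gT).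
Hypotheses (s_gt1 : 1 < s) (presG : is_G_s0 s G x y z).

Local Notation u := (trans_u x y z).
Local Notation v := (trans_v x y z).
Local Notation T := (<[u]> <*> <[v]>)%G.

Let rels : G_s0_rels s x y z. Proof. by case: presG. Qed.
Let cox : coxeter_rels x y z := G_s0_coxeter rels.

Lemma gens_in_G : [/\ x \in G, y \in G & z \in G].
Proof. by case: presG => -> _ _; split; rewrite mem_gen // !inE eqxx ?orbT. Qed.

Lemma trans_in_G : u \in G /\ v \in G.
Proof. by have [xG yG zG] := gens_in_G; rewrite !groupM. Qed.

(* The affine model separates the powers of u from those of v. *)
Lemma trans_indep i j : u ^+ i = v ^+ j -> (s %| i) && (s %| j).
Proof.
have [xG yG zG] := gens_in_G; have [uG vG] := trans_in_G.
case: presG => _ _ /(_ _ _ _ _ (aff_rels s_gt1)) [f [fx fy fz]] /(congr1 f).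
rewrite !morphX //; have [-> ->] := morph_trans f xG yG zG.
by rewrite fx fy fz; apply: aff_trans_indep.
Qed.

Lemma order_trans_u : #[u] = s.
Proof.
apply/eqP; rewrite eqn_dvd order_dvdn.
have [_ [_ _ _ ->]] := rels; rewrite eqxx /=.
by have /andP[] := trans_indep (etrans (expg_order u) (esym (expg0 v))).
Qed.

Lemma order_trans_v : #[v] = s.
Proof. by rewrite -(trans_u_conj_y cox) orderJ order_trans_u. Qed.

Lemma trans_TI : <[u]> :&: <[v]> = 1.
Proof.
apply/trivgP/subsetP => w /setIP[/cycleP[i ->] /cycleP[j eij]].
have /andP[s_dvd_i _] := trans_indep eij.
by rewrite inE -order_dvdn order_trans_u.
Qed.

Lemma transE : T = <[u]> * <[v]> :> {set gT}.
Proof.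
by rewrite /= cent_joinEr // cents_cycle //; apply/commute_sym/(trans_commute cox).
Qed.

Lemma card_trans : #|T| = (s * s)%N.
Proof.
by rewrite transE TI_cardMg ?trans_TI // -!orderE order_trans_u order_trans_v.
Qed.

Lemma trans_in_T : u \in T /\ v \in T.
Proof. by rewrite !mem_gen // !inE cycle_id ?orbT. Qed.

(* x and y map u and v into T, so they normalise T. *)
Lemma norm_trans : x \in 'N(T) /\ y \in 'N(T).
Proof.
have [uT vT] := trans_in_T.
have normT g : u ^ g \in T -> v ^ g \in T -> g \in 'N(T).
  by move=> ugT vgT; rewrite inE /= conjYg -!cycleJ join_subG !cycle_subG ugT.
split; apply: normT.
- by rewrite (trans_u_conj_x cox) groupV.
- by rewrite (trans_v_conj_x cox); apply: groupM; rewrite ?groupV.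
- by rewrite (trans_u_conj_y cox).
- by rewrite (trans_v_conj_y cox).
Qed.

(* G = T * <x, y>, since z = y x u y, and #|<x, y>| <= 6. *)
Lemma card_G_le : #|G| <= 6 * (s * s).
Proof.
have [[x2 y2 _] [xy3 _ _ _]] := rels; have [xN yN] := norm_trans.
have [uT _] := trans_in_T; set D := <<[set x; y]>>%G.
have DN : D \subset 'N(T) by rewrite gen_subG subUset !sub1set xN yN.
have xD : x \in T <*> D by rewrite mem_gen // inE [x \in D]mem_gen ?orbT // !inE eqxx.
have yD : y \in T <*> D by rewrite mem_gen // inE [y \in D]mem_gen ?orbT // !inE eqxx ?orbT.
have uD : u \in T <*> D by rewrite mem_gen // inE uT.
have GTD : G \subset T * D.
  rewrite -norm_joinEr //; case: presG => -> _ _.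
  rewrite gen_subG !subUset !sub1set xD yD /= {1}(z_from_trans cox).
  by rewrite (groupMr _ yD) (groupMr _ uD) (groupMr _ xD).
apply: leq_trans (subset_leq_card GTD) _.
apply: leq_trans (dvdn_leq _ (dvdn_cardMg _ _)) _; first by rewrite muln_gt0 !cardG_gt0.
by rewrite card_trans mulnC leq_mul2r card_gen_involutions_le ?orbT.
Qed.

(* The map onto S_3 kills T and its image has elements of orders 2 and 3, so
   6 divides the index of T. *)
Lemma six_dvd_index_trans : 6 %| #|G : T|.
Proof.
have [xG yG zG] := gens_in_G; have [uG vG] := trans_in_G.
case: presG => _ _ /(_ _ _ _ _ (sym_rels s)) [f [fx fy fz]].
have [fu fv] := morph_trans f xG yG zG.
have TK : T \subset 'ker f.
  rewrite join_subG !cycle_subG; apply/andP; split; apply/kerP => //.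
    by rewrite fu fx fy fz sym_trans_u.
  by rewrite fv fx fy fz sym_trans_v.
apply: dvdn_trans (indexgS G TK).
have := card_morphim f G; rewrite setIid => <-.
have im_x : sym_x \in f @* G by rewrite -fx mem_morphim.
have im_xy : sym_x * sym_y \in f @* G by rewrite -fx -fy -morphM // mem_morphim ?groupM.
have := order_dvdG im_x; have := order_dvdG im_xy.
by rewrite order_sym_x order_sym_xy -[6]/(2 * 3)%N Gauss_dvd // => -> ->.
Qed.

Lemma card_G : #|G| = (6 * (s * s))%N.
Proof.
have [uG vG] := trans_in_G.
have TG : T \subset G by rewrite join_subG !cycle_subG uG.
have [k def_k] := dvdnP six_dvd_index_trans.
have k_gt0 : 0 < k by move: (indexg_gt0 G T); rewrite def_k muln_gt0 => /andP[].
apply/eqP; rewrite eqn_leq card_G_le -(Lagrange TG) card_trans def_k /=.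
by rewrite [(6 * _)%N]mulnC leq_mul2l leq_pmull ?orbT.
Qed.

Variables a b : nat.
Hypothesis lcm_ab : lcmn a b = s.
Local Notation H := <<[set u ^+ a; v ^+ b]>>.

Lemma stabE : H = <[u ^+ a]> * <[v ^+ b]>.
Proof.
have cpq : <[v ^+ b]> \subset 'C(<[u ^+ a]>).
  by apply: cents_cycle; apply: commuteX2; apply/commute_sym/(trans_commute cox).
rewrite -cent_joinEr //; apply/eqP; rewrite eqEsubset gen_subG !subUset !sub1set.
rewrite !mem_gen ?inE ?cycle_id ?orbT //= join_subG !cycle_subG.
by rewrite !mem_gen // !inE eqxx ?orbT.
Qed.

Lemma stab_TI : <[u ^+ a]> :&: <[v ^+ b]> = 1.
Proof. by apply/trivgP; rewrite -trans_TI setISS ?cycleX. Qed.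

(* #|H| = (s/a)(s/b) and #|G| = 6 s^2, so #|G : H| = 6ab. *)
Lemma index_stab : #|G : H| = (6 * a * b)%N.
Proof.
have [uG vG] := trans_in_G.
have HG : H \subset G by rewrite gen_subG !subUset !sub1set !groupX.
have a_dvd : a %| s by rewrite -lcm_ab dvdn_lcml.
have b_dvd : b %| s by rewrite -lcm_ab dvdn_lcmr.
have s_gt0 : 0 < s := ltnW s_gt1.
have cardH : #|H| = (s %/ a * (s %/ b))%N.
  rewrite stabE TI_cardMg ?stab_TI // -!orderE.
  by rewrite !orderXdiv ?order_trans_u ?order_trans_v.
have pos : 0 < s %/ a * (s %/ b).
  by rewrite muln_gt0 !divn_gt0 ?(dvdn_gt0 s_gt0) ?(dvdn_leq s_gt0).
have := Lagrange HG; rewrite cardH card_G.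
move: (divnK a_dvd) (divnK b_dvd) pos; move: (s %/ a) (s %/ b) => pa pb sa sb pos.
by rewrite -{1}sa -sb => e; apply/eqP; rewrite -(eqn_pmul2l pos) e; apply/eqP; ring.
Qed.

(* A normal subgroup inside H also lies in H^y = <v^a> * <u^b>; in T these
   meet trivially because lcm(a, b) = s. *)
Lemma stab_core_free : core_free G [group of H].
Proof.
move=> N nNG sNH; apply/trivgP/subsetP => n nN.
have [_ yG _] := gens_in_G.
have nH : n \in <[u ^+ a]> * <[v ^+ b]> by rewrite -stabE (subsetP sNH).
have nyH : n ^ y \in <[u ^+ a]> * <[v ^+ b]>.
  by rewrite -stabE (subsetP sNH) // memJ_norm // (subsetP (normal_norm nNG)).
case/mulsgP: nyH => _ _ /cycleP[k ->] /cycleP[l ->].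
case/mulsgP: nH => _ _ /cycleP[i ->] /cycleP[j ->] ->.
rewrite conjMg !conjXg (trans_u_conj_y cox) (trans_v_conj_y cox) -!expgM.
have cvu : commute (v ^+ (a * i)) (u ^+ (b * j)).
  by apply: commuteX2; apply/commute_sym/(trans_commute cox).
rewrite cvu => /(TI_mul_eq trans_TI (mem_cycle _ _) (mem_cycle _ _)
  (mem_cycle _ _) (mem_cycle _ _)) [/eqP eq_u /eqP eq_v].
rewrite eq_expg_mod_order order_trans_u -lcm_ab lcmnC in eq_u.
rewrite eq_expg_mod_order order_trans_v -lcm_ab in eq_v.
have /eqP u1 : u ^+ (a * i) == 1.
  by rewrite -order_dvdn order_trans_u -lcm_ab (lcm_dvd_of_congr (eqP eq_v)).
have /eqP v1 : v ^+ (b * j) == 1.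
  by rewrite -order_dvdn order_trans_v -lcm_ab lcmnC (lcm_dvd_of_congr (eqP eq_u)).
by rewrite inE u1 v1 mulg1.
Qed.
End PresentedGroup.

Theorem mainTheorem8 (gT : finGroupType) (s : nat) (G : {group gT})
  (r0 r1 r2 : gT) (a b : nat) :
  2 <= s -> 0 < a -> 0 < b -> lcmn a b = s ->
  is_G_s0 s G r0 r1 r2 ->
  let H := <<[set trans_u r0 r1 r2 ^+ a; trans_v r0 r1 r2 ^+ b]>>%G in
  [/\ core_free G H,
      #|G : H| = (6 * a * b)%N
    & exists f : {morphism G >-> {perm 'I_(6 * a * b)%N}},
        'injm f /\ [transitive f @* G, on [set: 'I_(6 * a * b)%N] | 'P]].
Proof.
move=> s_gt1 _ _ lcm_ab presG H.
have cfH : core_free G H := stab_core_free s_gt1 presG lcm_ab.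
have idxH : #|G : H| = (6 * a * b)%N := index_stab s_gt1 presG lcm_ab.
by split=> //; rewrite -idxH; apply: core_free_action.
Qed.
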